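(* If $\mathcal T$ is a projective Fraïssé family of trees and $\mathbb T$ is the projective Fraïssé limit of $\mathcal T$, then $\mathbb T$ is hereditarily unicoherent.
   Context: A graph is a pair $(V,E)$ with $E\subseteq V^2$ reflexive and symmetric; an epimorphism is a vertex map sending edges to edges and surjective on vertices and edges. A topological graph has a compact, zero-dimensional, second-countable vertex set and a closed edge set; epimorphisms between them are continuous. A tree is a finite graph in which any two distinct vertices are joined by a unique sequence of pairwise distinct vertices with consecutive ones adjacent. A set $S$ of vertices of a topological graph (with a given edge set) is disconnected if $S=P\cup Q$ with $P,Q$ nonempty disjoint closed and no edge between $P$ and $Q$; otherwise connected. A topological graph $G$ is hereditarily unicoherent if for any two nonempty closed connected topological graphs $P,Q$ with $V(P),V(Q)\subseteq V(G)$ and $E(P),E(Q)\subseteq E(G)$, the graph $(V(P)\cap V(Q),E(P)\cap E(Q))$ is connected. A projective Fraïssé family is a class $\mathcal F$ of finite graphs with a fixed class of epimorphisms with countably many isomorphism types, closed under composition and containing identities, such that any two members are images of a common member under fixed epimorphisms, and for fixed $f\colon B\to A$, $g\colon C\to A$ there are $D$ and fixed $f_0,g_0$ with $f\circ f_0=g\circ g_0$. Its projective Fraïssé limit is the unique topological graph $\mathbb F$ that is an inverse limit $\varprojlim\{F_n,\alpha_n\}$ of members of $\mathcal F$ with fixed bonding maps (edges coordinatewise) such that (i) every $A\in\mathcal F$ is the image of an admissible epimorphism from $\mathbb F$, and (ii) for admissible $f\colon\mathbb F\to A$ and fixed $g\colon B\to A$ there is admissible $h\colon \mathbb F\to B$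 with $f=g\circ h$; admissible means of the form $h'\circ\alpha^\infty_m$ with $h'$ fixed and $\alpha^\infty_m$ the projection. *)

From mathcomp Require Import all_boot.

Record graph := Graph {
  gV :> finType;
  gE : rel gV;
  gE_refl : reflexive gE;
  gE_sym : symmetric gE }.

Definition epi_gen (T S : Type) (ET : T -> T -> Prop) (ES : S -> S -> Prop)
    (f : T -> S) : Prop :=
  (forall x y, ET x y -> ES (f x) (f y)) /\
  (forall a, exists x, f x = a) /\
  (forall a b, ES a b -> exists x y, ET x y /\ f x = a /\ f y = b).

Arguments epi_gen {T S}.

Definition is_epi (B A : graph) (f : gV B -> gV A) : Prop :=
  epi_gen (fun x y => gE B x y) (fun x y => gE A x y) f.

Definition graph_iso (A B : graph) : Prop :=
  exists f : gV A -> gV B, bijective f /\ forall x y, gE A x y = gE B (f x) (f y).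

Definition is_tree (A : graph) : Prop :=
  forall a b : gV A, a != b ->
    exists! s : seq (gV A), path (gE A) a s /\ last a s = b /\ uniq (a :: s).

(* fx A B f : "f : A -> B is a fixed epimorphism" *)
Definition fixed_rel := forall A B : graph, (gV A -> gV B) -> Prop.

Definition is_proj_fraisse (mem : graph -> Prop) (fx : fixed_rel) : Prop :=
  (forall A B f, fx A B f -> mem A /\ mem B /\ is_epi A B f) /\
  (exists g : nat -> graph, forall A, mem A -> exists n, graph_iso A (g n)) /\
  (forall A, mem A -> fx A A (fun x => x)) /\
  (forall A B C (f : gV A -> gV B) (g : gV B -> gV C),
      fx A B f -> fx B C g -> fx A C (fun x => g (f x))) /\
  (forall A B, mem A -> mem B ->
      exists C (f : gV C -> gV A) (g : gV C -> gV B), fx C A f /\ fx C B g) /\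
  (forall A B C (f : gV B -> gV A) (g : gV C -> gV A), fx B A f -> fx C A g ->
      exists D (f0 : gV D -> gV B) (g0 : gV D -> gV C),
        fx D B f0 /\ fx D C g0 /\ forall x, f (f0 x) = g (g0 x)).

Definition thread (F : nat -> graph) (alpha : forall n, gV (F n.+1) -> gV (F n))
  : Type := {x : forall n, gV (F n) | forall n, alpha n (x n.+1) = x n}.

Definition tproj (F : nat -> graph) (alpha : forall n, gV (F n.+1) -> gV (F n))
  (m : nat) (x : thread F alpha) : gV (F m) := proj1_sig x m.

Definition tedge (F : nat -> graph) (alpha : forall n, gV (F n.+1) -> gV (F n))
  (x y : thread F alpha) : Prop := forall n, gE (F n) (tproj F alpha n x) (tproj F alpha n y).

Definition admissible (fx : fixed_rel) (F : nat -> graph)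
  (alpha : forall n, gV (F n.+1) -> gV (F n)) (A : graph)
  (h : thread F alpha -> gV A) : Prop :=
  exists m (h' : gV (F m) -> gV A), fx (F m) A h' /\ forall x, h x = h' (tproj F alpha m x).

Definition is_fraisse_limit (mem : graph -> Prop) (fx : fixed_rel)
  (F : nat -> graph) (alpha : forall n, gV (F n.+1) -> gV (F n)) : Prop :=
  (forall n, mem (F n)) /\
  (forall n, fx (F n.+1) (F n) (alpha n)) /\
  (forall A, mem A -> exists f : thread F alpha -> gV A,
       admissible fx F alpha A f /\ epi_gen (tedge F alpha) (fun a b => gE A a b) f) /\
  (forall A B (f : thread F alpha -> gV A) (g : gV B -> gV A),
       admissible fx F alpha A f -> fx B A g ->
       exists h : thread F alpha -> gV B,
         admissible fx F alpha B h /\ forall x, f x = g (h x)).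

(* The inverse limit carries the subspace topology of the product of the
   finite discrete spaces F n; the basic neighbourhoods of a thread x are the
   cylinders {y | y n = x n}. *)
Definition tclosed (F : nat -> graph) (alpha : forall n, gV (F n.+1) -> gV (F n))
  (S : thread F alpha -> Prop) : Prop :=
  forall x, (forall n, exists y, S y /\ tproj F alpha n y = tproj F alpha n x) -> S x.

Definition tclosed2 (F : nat -> graph) (alpha : forall n, gV (F n.+1) -> gV (F n))
  (R : thread F alpha -> thread F alpha -> Prop) : Prop :=
  forall x y, (forall n, exists x' y', R x' y' /\ tproj F alpha n x' = tproj F alpha n x
                                        /\ tproj F alpha n y' = tproj F alpha n y) -> R x y.

Definition tconnected (F : nat -> graph) (alpha : forall n, gV (F n.+1) -> gV (F n))
  (S : thread F alpha -> Prop) (R : thread F alpha -> thread F alpha -> Prop) : Prop :=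
  ~ exists P Q : thread F alpha -> Prop,
      (forall x, S x <-> P x \/ Q x) /\
      (exists x, P x) /\ (exists x, Q x) /\
      (forall x, ~ (P x /\ Q x)) /\
      tclosed F alpha P /\ tclosed F alpha Q /\
      (forall x y, P x -> Q y -> ~ R x y /\ ~ R y x).

(* (VP, EP) is a topological graph with V(P) ⊆ V(G), E(P) ⊆ E(G):
   closed vertex set (hence compact, zero-dimensional, second countable),
   closed reflexive symmetric edge set on VP. *)
Definition sub_tgraph (F : nat -> graph) (alpha : forall n, gV (F n.+1) -> gV (F n))
  (VP : thread F alpha -> Prop) (EP : thread F alpha -> thread F alpha -> Prop) : Prop :=
  tclosed F alpha VP /\ tclosed2 F alpha EP /\
  (forall x y, EP x y -> VP x /\ VP y) /\
  (forall x, VP x -> EP x x) /\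
  (forall x y, EP x y -> EP y x) /\
  (forall x y, EP x y -> tedge F alpha x y).

Definition hereditarily_unicoherent (F : nat -> graph)
  (alpha : forall n, gV (F n.+1) -> gV (F n)) : Prop :=
  forall (VP VQ : thread F alpha -> Prop) (EP EQ : thread F alpha -> thread F alpha -> Prop),
    sub_tgraph F alpha VP EP -> sub_tgraph F alpha VQ EQ ->
    (exists x, VP x) -> (exists x, VQ x) ->
    tconnected F alpha VP EP -> tconnected F alpha VQ EQ ->
    tconnected F alpha (fun x => VP x /\ VQ x) (fun x y => EP x y /\ EQ x y).

(* By compactness (Koenig's lemma), a closed subgraph of the limit is
   connected iff, at every level n, the projections of any two of its vertices
   are joined by a path of projected edges.  At any level M, the projections
   of the connected subgraphs P and Q both contain the unique arc of the tree
   between two common vertices, so every edge of that arc is the projection of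
   a P-edge agreeing at level M with some Q-edge.  For M deep enough, such
   approximate common edges project at level n like genuine edges of the
   intersection, by a finite stabilization argument and compactness again. *)

From mathcomp Require Import all_boot boolp.

Set Implicit Arguments.
Unset Strict Implicit.
Unset Printing Implicit Defensive.

Definition infinitely_often (P : nat -> Prop) : Prop :=
  forall N, exists2 k, N <= k & P k.

Lemma infinitely_often_pigeonhole (S : finType) (f : nat -> S) (Q : S -> Prop) :
  infinitely_often (fun k => Q (f k)) ->
  exists2 s, Q s & infinitely_often (fun k => f k = s).
Proof.
move=> QfN; apply: contrapT => noS.
have bound s : exists N, Q s -> forall k, N <= k -> f k <> s.
  have [Qs | nQs] := pselect (Q s); last by exists 0.
  have /existsNP[N finN] : ~ infinitely_often (fun k => f k = s).
    by move=> infs; apply: noS; exists s.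
  by exists N => _ k leNk fks; apply: finN; exists k.
have [N bN] := fin_all_exists bound.
have [k le Qfk] := QfN (\max_s N s).
exact: bN (f k) Qfk k (leq_trans (leq_bigmax (f k)) le) erefl.
Qed.

Section CoherentChoice.
Variables (T : nat -> Type) (beta : forall n, T n.+1 -> T n).
Variable P : forall n, T n -> Prop.
Hypothesis P_0 : exists t : T 0, P t.
Hypothesis P_lift : forall n (t : T n), P t -> exists t', P t' /\ beta t' = t.

Fixpoint coherent_chain n : {t : T n | P t} :=
  match n return {t : T n | P t} with
  | 0 => cid P_0
  | m.+1 => let c := cid (P_lift (svalP (coherent_chain m))) in
            exist _ (sval c) (proj1 (svalP c))
  end.

Lemma coherent_choice :
  exists w : forall n, T n, (forall n, beta (w n.+1) = w n) /\ forall n, P (w n).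
Proof.
exists (fun n => sval (coherent_chain n)); split=> n; last exact: svalP.
exact: proj2 (svalP (cid (P_lift (svalP (coherent_chain n))))).
Qed.

End CoherentChoice.

Lemma coherent_cluster (T : nat -> finType) (beta : forall n, T n.+1 -> T n)
    (z : nat -> forall n, T n) :
  (forall k n, beta n (z k n.+1) = z k n) ->
  exists w : forall n, T n, (forall n, beta n (w n.+1) = w n) /\
    forall n, infinitely_often (fun k => z k n = w n).
Proof.
move=> zc.
apply: (coherent_choice (P := fun n t => infinitely_often (fun k => z k n = t))).
  have [t _ inf_t] := infinitely_often_pigeonhole (f := fun k => z k 0)
    (Q := fun _ => True) (fun N => ex_intro2 _ _ N (leqnn N) I).
  by exists t.
move=> n t inf_t.
have inf_lift : infinitely_often (fun k => beta n (z k n.+1) = t).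
  by move=> N; have [k le e] := inf_t N; exists k; rewrite ?zc.
have [t' <- inf_t'] := infinitely_often_pigeonhole (Q := fun s => beta n s = t) inf_lift.
by exists t'.
Qed.

Lemma connect_invariant (T : finType) (e : rel T) (I : T -> Prop) :
  (forall a b, e a b -> I a -> I b) -> forall a b, connect e a b -> I a -> I b.
Proof.
move=> eI a b /connectP[s + ->]; elim: s a => //= c s IH a /andP[eac pc] Ia.
exact: IH pc (eI _ _ eac Ia).
Qed.

Lemma tree_connect_relI (A : graph) (e1 e2 : rel A) a b :
  is_tree A -> subrel e1 (gE A) -> subrel e2 (gE A) ->
  connect e1 a b -> connect e2 a b -> connect [rel x y | e1 x y && e2 x y] a b.
Proof.
move=> treeA sub1 sub2 con1 con2.
have [<- | neq] := eqVneq a b; first exact: connect0.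
have [s [[_ [last_s _]] unique_s]] := treeA a b neq.
have on_arc e : subrel e (gE A) -> connect e a b -> path e a s.
  move=> sub /connectP[s0 p0]; case/shortenP: p0 => s1 p1 u1 _ last_s1.
  by rewrite (unique_s s1) //; split; [apply: sub_path p1 | split].
apply/connectP; exists s; last by rewrite last_s.
by rewrite path_relI on_arc // on_arc.
Qed.

Lemma decreasing_stabilizes (S : finType) (P : nat -> S -> Prop) N :
  (forall m m' s, m <= m' -> P m' s -> P m s) ->
  exists2 M, N <= M & forall s, P M s -> forall m, P m s.
Proof.
move=> decP.
have escape s : exists m, (forall m', P m' s) \/ ~ P m s.
  have [allP | /existsNP[m nP]] := pselect (forall m', P m' s).
    by exists 0; left.
  by exists m; right.
have [mu muP] := fin_all_exists escape.
exists (maxn N (\max_s mu s)) => [|s PMs]; first exact: leq_maxl.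
case: (muP s) => // [[]]; apply: decP PMs.
exact: leq_trans (leq_bigmax s) (leq_maxr _ _).
Qed.

Section InverseLimit.
Variables (F : nat -> graph) (alpha : forall n, gV (F n.+1) -> gV (F n)).
Local Notation th := (thread F alpha).
Local Notation pr := (tproj F alpha).

Lemma tproj_eq_le (x y : th) m n : n <= m -> pr m x = pr m y -> pr n x = pr n y.
Proof.
elim: m => [|m IH]; first by rewrite leqn0 => /eqP->.
rewrite leq_eqVlt => /orP[/eqP-> // | /IH{}IH exy]; apply: IH.
by rewrite /tproj -(svalP x m) -(svalP y m); congr (alpha _).
Qed.

Lemma thread_cluster (u v : nat -> th) : exists w1 w2 : th, forall n,
  infinitely_often (fun k => pr n (u k) = pr n w1 /\ pr n (v k) = pr n w2).
Proof.
pose beta n (t : F n.+1 * F n.+1) : F n * F n := (alpha t.1, alpha t.2).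
pose z k n : F n * F n := (pr n (u k), pr n (v k)).
have zc k n : beta n (z k n.+1) = z k n.
  by rewrite /beta /z /tproj /= (svalP (u k) n) (svalP (v k) n).
have [w [wc cw]] := coherent_cluster zc.
pose mk (x : forall n, F n) (xc : forall n, alpha (x n.+1) = x n) : th := exist _ x xc.
exists (mk _ (fun n => f_equal fst (wc n))), (mk _ (fun n => f_equal snd (wc n))).
by move=> n N; have [k le e] := cw n N; exists k => //; rewrite /mk /tproj /= -e.
Qed.

Lemma tclosed_disjoint_separated (P Q : th -> Prop) :
  tclosed F alpha P -> tclosed F alpha Q -> (forall x, P x -> Q x -> False) ->
  exists n, forall x y, P x -> Q y -> pr n x <> pr n y.
Proof.
move=> clP clQ disjPQ; apply: contrapT => unsep.
have meet n : exists xy : th * th, [/\ P xy.1, Q xy.2 & pr n xy.1 = pr n xy.2].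
  apply: contrapT => nmeet; apply: unsep; exists n => x y Px Qy exy.
  by apply: nmeet; exists (x, y).
have [g gP] := choice meet.
have [w [? cw]] := thread_cluster (fun k => (g k).1) (fun k => (g k).2).
apply: (disjPQ w).
  apply: clP => j; have [k _ [e _]] := cw j 0.
  by case: (gP k) => Pk _ _; exists (g k).1.
apply: clQ => j; have [k le [e _]] := cw j j.
case: (gP k) => _ Qk ek; exists (g k).2; split=> //.
by rewrite -e; apply: tproj_eq_le le (esym ek).
Qed.

Lemma tclosedI_cylinder (V : th -> Prop) M (A : F M -> Prop) :
  tclosed F alpha V -> tclosed F alpha (fun x => V x /\ A (pr M x)).
Proof.
move=> clV x near; split.
  by apply: clV => j; have [y [[Vy _] e]] := near j; exists y.
by have [y [[_ Ay] <-]] := near M.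
Qed.

Definition image_rel (E : th -> th -> Prop) n : rel (F n) :=
  fun a b => `[< exists x y, E x y /\ pr n x = a /\ pr n y = b >].
Arguments image_rel : clear implicits.

Lemma image_rel_subrel (E : th -> th -> Prop) n :
  (forall x y, E x y -> tedge F alpha x y) -> subrel (image_rel E n) (gE (F n)).
Proof. by move=> subE _ _ /asboolP[x [y [Exy [<- <-]]]]; apply: subE. Qed.

Lemma tconnected_connect_image (V : th -> Prop) (E : th -> th -> Prop) M p q :
  tclosed F alpha V -> (forall x y, E x y -> E y x) -> tconnected F alpha V E ->
  V p -> V q -> connect (image_rel E M) (pr M p) (pr M q).
Proof.
move=> clV symE conV Vp Vq; apply: contrapT => npq; apply: conV.
pose A c := connect (image_rel E M) (pr M p) c.
have A_edge x y : E x y -> A (pr M x) -> A (pr M y).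
  move=> Exy Ax; apply: connect_trans Ax (connect1 _).
  by apply/asboolP; exists x, y.
exists (fun x => V x /\ A (pr M x)), (fun x => V x /\ ~ A (pr M x)).
split.
  move=> x; split=> [Vx | [] []//].
  by have [Ax | nAx] := pselect (A (pr M x)); [left | right].
split; first by exists p; split=> //; apply: connect0.
split; first by exists q.
split; first by move=> x [[_ Ax] [_ nAx]].
split; first exact: (tclosedI_cylinder (A := A) clV).
split; first exact: (tclosedI_cylinder (A := fun c => ~ A c) clV).
move=> x y [_ Ax] [_ nAy]; split=> Exy; apply: nAy.
  exact: A_edge Exy Ax.
exact: A_edge (symE _ _ Exy) Ax.
Qed.

Lemma tconnected_of_connect_image (V : th -> Prop) (E : th -> th -> Prop) :
  (forall x y, E x y -> V x /\ V y) ->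
  (forall p q n, V p -> V q -> connect (image_rel E n) (pr n p) (pr n q)) ->
  tconnected F alpha V E.
Proof.
move=> EV conn [P [Q [cover [[p Pp] [[q Qq] [disjPQ [clP [clQ noPQ]]]]]]]].
have [n sep] := tclosed_disjoint_separated clP clQ (fun x Px Qx => disjPQ x (conj Px Qx)).
have Vp : V p by apply/cover; left.
have Vq : V q by apply/cover; right.
pose J a := exists2 x, P x & pr n x = a.
have J_edge a b : image_rel E n a b -> J a -> J b.
  move=> /asboolP[w1 [w2 [Ew [<- <-]]]] [x Px ex].
  have [Vw1 Vw2] := EV _ _ Ew.
  have Pw1 : P w1 by case/cover: Vw1 => // Qw1; case: (sep x w1 Px Qw1 ex).
  by exists w2 => //; case/cover: Vw2 => // Qw2; case: (noPQ _ _ Pw1 Qw2).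
have [x Px exq] := connect_invariant J_edge (conn p q n Vp Vq) (ex_intro2 _ _ p Pp erefl).
exact: sep x q Px Qq exq.
Qed.

(* [tclosed2 E] says exactly that [E x y] holds as soon as [near_rel E m x y]
   holds for every [m]. *)
Definition near_rel (E : th -> th -> Prop) m (x y : th) : Prop :=
  exists x' y', E x' y' /\ pr m x' = pr m x /\ pr m y' = pr m y.

Lemma near_rel_le (E : th -> th -> Prop) m m' x y :
  m <= m' -> near_rel E m' x y -> near_rel E m x y.
Proof.
move=> le [x' [y' [Exy [ex ey]]]].
by exists x', y'; split=> //; split; apply: tproj_eq_le le _.
Qed.

Lemma image_rel_meet_of_near (E1 E2 : th -> th -> Prop) n (a b : F n) :
  tclosed2 F alpha E1 -> tclosed2 F alpha E2 ->
  (forall m, image_rel (fun x y => E1 x y /\ near_rel E2 m x y) n a b) ->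
  image_rel (fun x y => E1 x y /\ E2 x y) n a b.
Proof.
move=> clE1 clE2 near.
have /choice[uv uvP] m : exists uv : th * th,
    [/\ E1 uv.1 uv.2, near_rel E2 m uv.1 uv.2, pr n uv.1 = a & pr n uv.2 = b].
  by have /asboolP[x [y [[E1xy nxy] [ea eb]]]] := near m; exists (x, y).
have [w1 [w2 cw]] := thread_cluster (fun k => (uv k).1) (fun k => (uv k).2).
apply/asboolP; exists w1, w2; split; first split.
- apply: clE1 => j; have [k _ [e1 e2]] := cw j 0.
  by case: (uvP k) => E1k _ _ _; exists (uv k).1, (uv k).2.
- apply: clE2 => j; have [k le [e1 e2]] := cw j j.
  case: (uvP k) => _ /(near_rel_le le)[x' [y' [E2k [e1' e2']]]] _ _.
  by exists x', y'; rewrite e1' e2'.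
- have [k _ [e1 e2]] := cw n 0.
  by case: (uvP k) => _ _ ea eb; rewrite -e1 -e2.
Qed.

Lemma near_common_edge_level (E1 E2 : th -> th -> Prop) n :
  tclosed2 F alpha E1 -> tclosed2 F alpha E2 ->
  exists2 M, n <= M & forall a b : F n,
    image_rel (fun x y => E1 x y /\ near_rel E2 M x y) n a b ->
    image_rel (fun x y => E1 x y /\ E2 x y) n a b.
Proof.
move=> clE1 clE2.
pose P m (ab : F n * F n) :=
  image_rel (fun x y => E1 x y /\ near_rel E2 m x y) n ab.1 ab.2.
have P_decr m m' ab : m <= m' -> P m' ab -> P m ab.
  move=> le /asboolP[x [y [[E1xy nxy] e]]]; apply/asboolP; exists x, y.
  by split=> //; split=> //; apply: near_rel_le le nxy.
have [M leM stable] := decreasing_stabilizes n P_decr.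
exists M => // a b near; apply: image_rel_meet_of_near clE1 clE2 _ => m.
exact: stable (a, b) near m.
Qed.

Lemma connect_image_meet_down (E1 E2 : th -> th -> Prop) n M p q :
  n <= M ->
  (forall a b : F n, image_rel (fun x y => E1 x y /\ near_rel E2 M x y) n a b ->
                     image_rel (fun x y => E1 x y /\ E2 x y) n a b) ->
  connect [rel c d | image_rel E1 M c d && image_rel E2 M c d] (pr M p) (pr M q) ->
  connect (image_rel (fun x y => E1 x y /\ E2 x y) n) (pr n p) (pr n q).
Proof.
move=> leM lift conM.
pose I c := exists2 z, pr M z = c &
  connect (image_rel (fun x y => E1 x y /\ E2 x y) n) (pr n p) (pr n z).
have I_edge c d : image_rel E1 M c d && image_rel E2 M c d -> I c -> I d.
  move=> /andP[/asboolP[x [y [E1xy [<- <-]]]] /asboolP[x' [y' [E2xy [ex ey]]]]].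
  move=> [z ez conz]; exists y => //; apply: connect_trans conz (connect1 _).
  rewrite (tproj_eq_le leM ez); apply: lift; apply/asboolP; exists x, y.
  by split=> //; split=> //; exists x', y'.
have [z ez conz] := connect_invariant I_edge conM (ex_intro2 _ _ p erefl (connect0 _ _)).
by rewrite -(tproj_eq_le leM ez).
Qed.

Lemma connect_image_meet (VP VQ : th -> Prop) (EP EQ : th -> th -> Prop) p q n :
  (forall m, is_tree (F m)) ->
  sub_tgraph F alpha VP EP -> sub_tgraph F alpha VQ EQ ->
  tconnected F alpha VP EP -> tconnected F alpha VQ EQ ->
  VP p -> VQ p -> VP q -> VQ q ->
  connect (image_rel (fun x y => EP x y /\ EQ x y) n) (pr n p) (pr n q).
Proof.
move=> tree [clVP [clEP [_ [_ [symEP subEP]]]]] [clVQ [clEQ [_ [_ [symEQ subEQ]]]]].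
move=> conP conQ VPp VQp VPq VQq.
have [M leM lift] := near_common_edge_level n clEP clEQ.
apply: connect_image_meet_down leM lift _.
apply: tree_connect_relI (tree M) (image_rel_subrel subEP) (image_rel_subrel subEQ) _ _.
  exact: tconnected_connect_image clVP symEP conP VPp VPq.
exact: tconnected_connect_image clVQ symEQ conQ VQp VQq.
Qed.

End InverseLimit.

Theorem theorem2p18 (mem : graph -> Prop) (fx : fixed_rel) (F : nat -> graph)
  (alpha : forall n, gV (F n.+1) -> gV (F n)) :
  is_proj_fraisse mem fx ->
  (forall A, mem A -> is_tree A) ->
  is_fraisse_limit mem fx F alpha ->
  hereditarily_unicoherent F alpha.
Proof.
move=> _ tree_mem [memF _] VP VQ EP EQ subP subQ _ _ conP conQ.
apply: tconnected_of_connect_image.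
  move=> x y [EPxy EQxy]; case: subP => _ [_ [EVP _]]; case: subQ => _ [_ [EVQ _]].
  by have [? ?] := EVP _ _ EPxy; have [? ?] := EVQ _ _ EQxy.
move=> p q n [VPp VQp] [VPq VQq].
exact: connect_image_meet (fun m => tree_mem _ (memF m)) subP subQ conP conQ
  VPp VQp VPq VQq.
Qed.
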